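(* There is an absolute constant $C>0$ (independent of $n$, $f$, $g$, $x$) such that for all real-valued $f,g\in C^{3}[0,1]$, all $x\in[0,1]$ and $n\in\mathbb{N}$, $$n\left|B_{n}(fg)(x)-B_{n}(f)(x)B_{n}(g)(x)-\frac{x(1-x)}{n}f'(x)g'(x)\right|\le C\,x(1-x)\frac{1}{\sqrt{n}}\max\{\|f\|,\|f'''\|\}\cdot\max\{\|g\|,\|g'''\|\}.$$
   Context: For $f:[0,1]\to\mathbb{R}$ the Bernstein polynomials are $B_{n}(f)(x)=\sum_{k=0}^{n}\binom{n}{k}x^{k}(1-x)^{n-k}f(k/n)$. $\|\cdot\|$ denotes the uniform norm on $C[0,1]$. *)

From Stdlib Require Import Reals.
From Coquelicot Require Import Coquelicot.
Open Scope R_scope.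

Definition bernstein (n : nat) (f : R -> R) (x : R) : R :=
  sum_f_R0 (fun k => Binomial.C n k * x ^ k * (1 - x) ^ (n - k) * f (INR k / INR n)) n.

Definition has_deriv_01 (h h' : R -> R) : Prop :=
  forall x, 0 <= x <= 1 -> forall eps, 0 < eps -> exists delta, 0 < delta /\
    forall y, 0 <= y <= 1 -> y <> x -> Rabs (y - x) < delta ->
      Rabs ((h y - h x) / (y - x) - h' x) < eps.

Definition cont_01 (h : R -> R) : Prop :=
  forall x, 0 <= x <= 1 -> forall eps, 0 < eps -> exists delta, 0 < delta /\
    forall y, 0 <= y <= 1 -> Rabs (y - x) < delta -> Rabs (h y - h x) < eps.

Definition C3_01 (f f1 f2 f3 : R -> R) : Prop :=
  has_deriv_01 f f1 /\ has_deriv_01 f1 f2 /\ has_deriv_01 f2 f3 /\ cont_01 f3.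

Definition supnorm (h : R -> R) : R :=
  real (Lub_Rbar (fun r => exists t, 0 <= t <= 1 /\ r = Rabs (h t))).

From Stdlib Require Import Reals Lra Lia.
From Coquelicot Require Import Coquelicot.
Open Scope R_scope.

(* Since [bernstein n h x] is the expectation of [h (K / n)] for [K ~ Bin(n, x)],
   the quantity [B_n(fg) - B_n f B_n g] is a covariance.  Expanding
   [f (K/n) = f x + f' x Y + R_f] with [Y = K/n - x] and [|R_f| <= 67 M_f Y^2]
   (the bounds [|f''| <= 67 M_f], [|f'| <= 18 M_f] by [M_f = max(|f|, |f'''|)] come
   from third-order expansions at two points at distance 1/4 and 1/2), the linear
   parts contribute exactly [f' x g' x E Y^2 = f' x g' x x(1-x)/n].  Every other term
   is bounded by [E|Y|^3] or [E Y^4 <= 2 x(1-x)/n^2], and [E|Y|^3 = O(x(1-x) n^(-3/2))]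
   follows by AM-GM between the second and fourth moments. *)

Definition clamp01 (t : R) : R := Rmax 0 (Rmin 1 t).

Lemma clamp01_in (t : R) : 0 <= clamp01 t <= 1.
Proof. unfold clamp01, Rmax, Rmin; repeat destruct Rle_dec; lra. Qed.

Lemma clamp01_id (t : R) : 0 <= t <= 1 -> clamp01 t = t.
Proof. intros; unfold clamp01, Rmax, Rmin; repeat destruct Rle_dec; lra. Qed.

Lemma clamp01_lipschitz (a b : R) : Rabs (clamp01 a - clamp01 b) <= Rabs (a - b).
Proof.
  pose proof (Rle_abs (a - b)); pose proof (Rle_abs (- (a - b))); rewrite Rabs_Ropp in *.
  unfold clamp01, Rmax, Rmin; repeat destruct Rle_dec; apply Rabs_le; lra.
Qed.

Lemma clamp01_continuous (t : R) : continuity_pt clamp01 t.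
Proof.
  intros eps Heps; exists eps; split; [exact Heps|].
  intros y [_ Hy]; simpl in *; unfold R_dist in *.
  pose proof (clamp01_lipschitz y t); lra.
Qed.

(* Composing with [clamp01] turns (one-sided) continuity on [0,1] into
   continuity on all of R, the form expected by [MVT_gen] and [continuity_ab_maj]. *)
Definition cont_clamped (h : R -> R) : Prop :=
  forall t, continuity_pt (fun u => h (clamp01 u)) t.

Lemma cont_01_clamped (h : R -> R) : cont_01 h -> cont_clamped h.
Proof.
  intros Hh t eps Heps.
  destruct (Hh (clamp01 t) (clamp01_in t) eps Heps) as [d [Hd Hclose]].
  exists d; split; [exact Hd|].
  intros y [_ Hy]; simpl in *; unfold R_dist in *.
  apply Hclose; [apply clamp01_in|].
  pose proof (clamp01_lipschitz y t); lra.
Qed.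

Lemma has_deriv_01_cont_01 (h h' : R -> R) : has_deriv_01 h h' -> cont_01 h.
Proof.
  intros Hh x Hx eps Heps.
  destruct (Hh x Hx 1 Rlt_0_1) as [d [Hd Hquot]].
  set (K := Rabs (h' x) + 1).
  assert (HK : 0 < K) by (pose proof (Rabs_pos (h' x)); unfold K; lra).
  exists (Rmin d (eps / K)); split.
  { apply Rmin_pos; [exact Hd | apply Rdiv_lt_0_compat; assumption]. }
  intros y Hy Hyx.
  destruct (Req_dec y x) as [-> | Hne].
  { rewrite Rminus_diag, Rabs_R0; exact Heps. }
  pose proof (Rmin_l d (eps / K)); pose proof (Rmin_r d (eps / K)).
  assert (Hq : Rabs ((h y - h x) / (y - x)) <= K).
  { pose proof (Hquot y Hy Hne ltac:(lra)).
    pose proof (Rabs_triang ((h y - h x) / (y - x) - h' x) (h' x)).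
    replace ((h y - h x) / (y - x) - h' x + h' x) with ((h y - h x) / (y - x)) in * by ring.
    unfold K; lra. }
  replace (h y - h x) with ((h y - h x) / (y - x) * (y - x)) by (field; lra).
  rewrite Rabs_mult.
  apply Rle_lt_trans with (K * Rabs (y - x)).
  { apply Rmult_le_compat_r; [apply Rabs_pos | exact Hq]. }
  replace eps with (K * (eps / K)) by (field; lra).
  apply Rmult_lt_compat_l; lra.
Qed.

Lemma has_deriv_01_clamped (h h' : R -> R) : has_deriv_01 h h' -> cont_clamped h.
Proof. intros Hh; apply cont_01_clamped, (has_deriv_01_cont_01 h h'), Hh. Qed.

Lemma has_deriv_01_is_derive (h h' : R -> R) (c : R) :
  has_deriv_01 h h' -> 0 < c < 1 -> is_derive h c (h' c).
Proof.
  intros Hh Hc; apply is_derive_Reals; intros eps Heps.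
  destruct (Hh c ltac:(lra) eps Heps) as [d [Hd Hquot]].
  assert (Hpos : 0 < Rmin d (Rmin c (1 - c))) by (repeat apply Rmin_pos; lra).
  exists (mkposreal _ Hpos); intros u Hu Hul; simpl in Hul.
  pose proof (Rmin_l d (Rmin c (1 - c))); pose proof (Rmin_r d (Rmin c (1 - c))).
  pose proof (Rmin_l c (1 - c)); pose proof (Rmin_r c (1 - c)).
  apply Rabs_def2 in Hul as Hb.
  replace u with ((c + u) - c) at 2 by ring.
  apply Hquot; [lra | lra | replace (c + u - c) with u by ring; lra].
Qed.

Lemma MVT_01 (h dh : R -> R) (a b : R) :
  cont_clamped h -> (forall c, 0 < c < 1 -> is_derive h c (dh c)) ->
  0 <= a <= 1 -> 0 <= b <= 1 ->
  exists c, Rmin a b <= c <= Rmax a b /\ h b - h a = dh c * (b - a).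
Proof.
  intros Hcont Hder Ha Hb.
  destruct (MVT_gen (fun u => h (clamp01 u)) a b dh) as [c [Hc Heq]].
  - intros y Hy.
    assert (Hy01 : 0 < y < 1) by (unfold Rmin, Rmax in Hy; repeat destruct Rle_dec; lra).
    apply is_derive_ext_loc with h; [|apply Hder; exact Hy01].
    assert (Hpos : 0 < Rmin y (1 - y)) by (apply Rmin_pos; lra).
    exists (mkposreal _ Hpos); intros z Hz.
    change (Rabs (z - y) < Rmin y (1 - y)) in Hz.
    pose proof (Rmin_l y (1 - y)); pose proof (Rmin_r y (1 - y)).
    apply Rabs_def2 in Hz; rewrite clamp01_id; lra.
  - intros; apply Hcont.
  - exists c; split; [exact Hc|]. rewrite !clamp01_id in Heq; assumption.
Qed.

(* The mean-value step by which each order of the Taylor estimates is gained. *)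
Lemma abs_sub_le_pow_succ (h dh q dq : R -> R) (x B : R) (k : nat) :
  cont_clamped h -> (forall c, 0 < c < 1 -> is_derive h c (dh c)) ->
  (forall c, is_derive q c (dq c)) ->
  0 <= x <= 1 -> h x = q x -> 0 <= B ->
  (forall c, 0 <= c <= 1 -> Rabs (dh c - dq c) <= B * Rabs (c - x) ^ k) ->
  forall t, 0 <= t <= 1 -> Rabs (h t - q t) <= B * Rabs (t - x) ^ S k.
Proof.
  intros Hcont Hh Hq Hx Hhx HB Hbound t Ht.
  assert (Hq_cont : forall u, continuity_pt q u).
  { intros u; apply continuity_pt_filterlim.
    apply (ex_derive_continuous (K := R_AbsRing) (V := R_NormedModule)).
    exists (dq u); apply Hq. }
  destruct (MVT_01 (fun u => h u - q u) (fun u => dh u - dq u) x t) as [c [Hc Heq]];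
    [| | exact Hx | exact Ht |].
  - intros u; apply continuity_pt_minus; [apply Hcont|].
    apply (continuity_pt_comp clamp01 q); [apply clamp01_continuous | apply Hq_cont].
  - intros c Hc; apply (is_derive_minus h q); [apply Hh; exact Hc | apply Hq].
  - assert (Hc01 : 0 <= c <= 1) by (unfold Rmin, Rmax in Hc; repeat destruct Rle_dec; lra).
    assert (Hcx : Rabs (c - x) <= Rabs (t - x)).
    { pose proof (Rle_abs (t - x)); pose proof (Rle_abs (- (t - x))); rewrite Rabs_Ropp in *.
      unfold Rmin, Rmax in Hc; repeat destruct Rle_dec; apply Rabs_le; lra. }
    replace (h t - q t) with ((dh c - dq c) * (t - x)) by lra.
    rewrite Rabs_mult, <- tech_pow_Rmult, (Rmult_comm (Rabs (t - x))), <- Rmult_assoc.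
    apply Rmult_le_compat_r; [apply Rabs_pos|].
    apply Rle_trans with (B * Rabs (c - x) ^ k); [apply Hbound, Hc01|].
    apply Rmult_le_compat_l; [exact HB|]. apply pow_incr; split; [apply Rabs_pos | exact Hcx].
Qed.

Lemma abs_le_supnorm (h : R -> R) :
  cont_clamped h -> forall t, 0 <= t <= 1 -> Rabs (h t) <= supnorm h.
Proof.
  intros Hcont t Ht.
  destruct (continuity_ab_maj (fun u => Rabs (h (clamp01 u))) 0 1 ltac:(lra)) as [m [Hm _]].
  { intros c _.
    apply (continuity_pt_comp (fun u => h (clamp01 u)) Rabs c (Hcont c)), Rcontinuity_abs. }
  unfold supnorm.
  set (A := fun r => exists t, 0 <= t <= 1 /\ r = Rabs (h t)).
  destruct (Lub_Rbar_correct A) as [Hub Hlub].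
  assert (Hle : Rbar_le (Lub_Rbar A) (Rabs (h (clamp01 m)))).
  { apply Hlub; intros r [u [Hu ->]]; simpl.
    specialize (Hm u Hu); simpl in Hm; rewrite clamp01_id in Hm; assumption. }
  assert (Hge : Rbar_le (Rabs (h t)) (Lub_Rbar A)) by (apply Hub; exists t; auto).
  destruct (Lub_Rbar A); simpl in *; tauto.
Qed.

Section TaylorC3.
Variables f f1 f2 f3 : R -> R.
Hypothesis Hf : C3_01 f f1 f2 f3.
Let M := Rmax (supnorm f) (supnorm f3).

Lemma abs_le_Rmax_supnorm_l (t : R) : 0 <= t <= 1 -> Rabs (f t) <= M.
Proof.
  intros Ht; destruct Hf as (Hd0 & _).
  apply Rle_trans with (supnorm f); [|apply Rmax_l].
  apply (abs_le_supnorm f (has_deriv_01_clamped f f1 Hd0) t Ht).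
Qed.

Lemma abs_le_Rmax_supnorm_r (t : R) : 0 <= t <= 1 -> Rabs (f3 t) <= M.
Proof.
  intros Ht; destruct Hf as (_ & _ & _ & Hc3).
  apply Rle_trans with (supnorm f3); [|apply Rmax_r].
  apply (abs_le_supnorm f3 (cont_01_clamped f3 Hc3) t Ht).
Qed.

Lemma Rmax_supnorm_ge0 : 0 <= M.
Proof. apply Rle_trans with (Rabs (f 0)); [apply Rabs_pos | apply abs_le_Rmax_supnorm_l; lra]. Qed.

Lemma taylor3_01 (x t : R) : 0 <= x <= 1 -> 0 <= t <= 1 ->
  Rabs (f t - (f x + f1 x * (t - x) + f2 x * (t - x) ^ 2 / 2)) <= M * Rabs (t - x) ^ 3.
Proof.
  intros Hx; destruct Hf as (Hd0 & Hd1 & Hd2 & _).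
  pose proof Rmax_supnorm_ge0 as HM.
  assert (Hf2 : forall t, 0 <= t <= 1 -> Rabs (f2 t - f2 x) <= M * Rabs (t - x) ^ 1).
  { apply (abs_sub_le_pow_succ f2 f3 (fun _ => f2 x) (fun _ => 0));
      try solve [auto | apply (has_deriv_01_clamped _ f3); auto
                 | intros; apply has_deriv_01_is_derive; auto | intros; auto_derive; auto].
    intros c Hc; rewrite Rminus_0_r, pow_O, Rmult_1_r; apply abs_le_Rmax_supnorm_r, Hc. }
  assert (Hf1 : forall t, 0 <= t <= 1 ->
            Rabs (f1 t - (f1 x + f2 x * (t - x))) <= M * Rabs (t - x) ^ 2).
  { apply (abs_sub_le_pow_succ f1 f2 (fun t => f1 x + f2 x * (t - x)) (fun _ => f2 x));
      try solve [auto | apply (has_deriv_01_clamped _ f2); auto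
                 | intros; apply has_deriv_01_is_derive; auto | ring].
    intros; auto_derive; auto; ring. }
  apply (abs_sub_le_pow_succ f f1 (fun t => f x + f1 x * (t - x) + f2 x * (t - x) ^ 2 / 2)
           (fun c => f1 x + f2 x * (c - x)));
    try solve [auto | apply (has_deriv_01_clamped _ f1); auto
               | intros; apply has_deriv_01_is_derive; auto | unfold Rdiv; ring].
  intros; auto_derive; auto; field.
Qed.

(* Landau-type interpolation: compare the third-order expansions at [x + d]
   and [x + 2 d] with [|d| = 1/4] pointing into [0,1]. *)
Lemma abs_derivs_le (x : R) : 0 <= x <= 1 -> Rabs (f2 x) <= 67 * M /\ Rabs (f1 x) <= 18 * M.
Proof.
  intros Hx.
  assert (Hstep : forall d, Rabs d = 1/4 -> 0 <= x + d <= 1 -> 0 <= x + 2 * d <= 1 ->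
                  Rabs (f2 x) <= 67 * M /\ Rabs (f1 x) <= 18 * M).
  { intros d Hd H1 H2.
    pose proof (taylor3_01 x (x + d) Hx H1) as T1.
    pose proof (taylor3_01 x (x + 2 * d) Hx H2) as T2.
    replace (x + d - x) with d in T1 by ring.
    replace (x + 2 * d - x) with (2 * d) in T2 by ring.
    rewrite Rabs_mult, Hd, (Rabs_pos_eq 2) in T2 by lra; rewrite Hd in T1.
    pose proof (abs_le_Rmax_supnorm_l x Hx) as B0.
    pose proof (abs_le_Rmax_supnorm_l _ H1) as B1.
    pose proof (abs_le_Rmax_supnorm_l _ H2) as B2.
    assert (Hd2 : d ^ 2 = 1/16) by (rewrite <- pow2_abs, Hd; field).
    apply Rabs_le_between in T1, T2, B0, B1, B2.
    split; apply Rabs_le; split; nra. }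
  destruct (Rle_dec x (1/2)); [apply (Hstep (1/4)) | apply (Hstep (-1/4))];
    try lra; [rewrite Rabs_pos_eq | rewrite Rabs_left]; lra.
Qed.

Lemma taylor2_01 (x t : R) : 0 <= x <= 1 -> 0 <= t <= 1 ->
  Rabs (f t - (f x + f1 x * (t - x))) <= 67 * M * (t - x) ^ 2.
Proof.
  intros Hx; rewrite <- pow2_abs; revert t; destruct Hf as (Hd0 & Hd1 & _).
  pose proof Rmax_supnorm_ge0 as HM.
  assert (Hf1 : forall t, 0 <= t <= 1 -> Rabs (f1 t - f1 x) <= 67 * M * Rabs (t - x) ^ 1).
  { apply (abs_sub_le_pow_succ f1 f2 (fun _ => f1 x) (fun _ => 0));
      try solve [auto | lra | apply (has_deriv_01_clamped _ f2); auto
                 | intros; apply has_deriv_01_is_derive; auto | intros; auto_derive; auto].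
    intros c Hc; rewrite Rminus_0_r, pow_O, Rmult_1_r; apply abs_derivs_le, Hc. }
  apply (abs_sub_le_pow_succ f f1 (fun t => f x + f1 x * (t - x)) (fun _ => f1 x));
    try solve [auto | lra | apply (has_deriv_01_clamped _ f1); auto
               | intros; apply has_deriv_01_is_derive; auto | ring].
  intros; auto_derive; auto; ring.
Qed.

End TaylorC3.

Definition Ebin (n : nat) (x : R) (phi : nat -> R) : R :=
  sum_f_R0 (fun k => Binomial.C n k * x ^ k * (1 - x) ^ (n - k) * phi k) n.

Lemma bernstein_Ebin (n : nat) (f : R -> R) (x : R) :
  bernstein n f x = Ebin n x (fun k => f (INR k / INR n)).
Proof. reflexivity. Qed.

Lemma Ebin_ext (n : nat) (x : R) (phi psi : nat -> R) :
  (forall k, (k <= n)%nat -> phi k = psi k) -> Ebin n x phi = Ebin n x psi.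
Proof. intros H; apply sum_eq; intros k Hk; rewrite H; auto. Qed.

Lemma Ebin_plus (n : nat) (x : R) (phi psi : nat -> R) :
  Ebin n x (fun k => phi k + psi k) = Ebin n x phi + Ebin n x psi.
Proof. unfold Ebin; rewrite <- sum_plus; apply sum_eq; intros; ring. Qed.

Lemma Ebin_scal (n : nat) (x c : R) (phi : nat -> R) :
  Ebin n x (fun k => c * phi k) = c * Ebin n x phi.
Proof. unfold Ebin; rewrite scal_sum; apply sum_eq; intros; ring. Qed.

Lemma Binomial_C_ge0 (n k : nat) : 0 <= Binomial.C n k.
Proof.
  unfold Binomial.C; apply Rmult_le_pos; [apply pos_INR|].
  apply Rlt_le, Rinv_0_lt_compat, Rmult_lt_0_compat; apply lt_0_INR, Factorial.lt_O_fact.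
Qed.

Lemma Ebin_le (n : nat) (x : R) (phi psi : nat -> R) : 0 <= x <= 1 ->
  (forall k, (k <= n)%nat -> phi k <= psi k) -> Ebin n x phi <= Ebin n x psi.
Proof.
  intros Hx H; apply sum_Rle; intros k Hk.
  apply Rmult_le_compat_l; [|auto].
  apply Rmult_le_pos; [apply Rmult_le_pos|]; [apply Binomial_C_ge0 | apply pow_le; lra ..].
Qed.

Lemma Ebin_nonneg (n : nat) (x : R) (phi : nat -> R) : 0 <= x <= 1 ->
  (forall k, (k <= n)%nat -> 0 <= phi k) -> 0 <= Ebin n x phi.
Proof.
  intros Hx H; replace 0 with (Ebin n x (fun _ => 0 * 1)) by (rewrite Ebin_scal; ring).
  apply Ebin_le; [exact Hx|]; intros k Hk; rewrite Rmult_0_l; auto.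
Qed.

Lemma Ebin_abs_le (n : nat) (x : R) (phi psi : nat -> R) : 0 <= x <= 1 ->
  (forall k, (k <= n)%nat -> Rabs (phi k) <= psi k) -> Rabs (Ebin n x phi) <= Ebin n x psi.
Proof.
  intros Hx H; apply Rabs_le; split.
  - replace (- Ebin n x psi) with (Ebin n x (fun k => -1 * psi k)) by (rewrite Ebin_scal; ring).
    apply Ebin_le; [exact Hx|]; intros k Hk; specialize (H k Hk); apply Rabs_le_between in H; lra.
  - apply Ebin_le; [exact Hx|]; intros k Hk; specialize (H k Hk); apply Rabs_le_between in H; lra.
Qed.

(* Binomial weights extended by zero beyond [n]; [Binomial.C n k] itself is
   junk (not zero) for [k > n], which would break the Pascal recursion. *)
Definition binom_weight (n : nat) (x : R) (k : nat) : R :=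
  if (k <=? n)%nat then Binomial.C n k * x ^ k * (1 - x) ^ (n - k) else 0.

Lemma Ebin_binom_weight (n : nat) (x : R) (phi : nat -> R) (m : nat) : (n <= m)%nat ->
  Ebin n x phi = sum_f_R0 (fun k => binom_weight n x k * phi k) m.
Proof.
  intros Hm; induction Hm as [|m Hm IH].
  - apply sum_eq; intros k Hk; unfold binom_weight.
    replace (k <=? n)%nat with true by (symmetry; apply Nat.leb_le; lia); reflexivity.
  - rewrite tech5, <- IH; unfold binom_weight.
    replace (S m <=? n)%nat with false by (symmetry; apply Nat.leb_gt; lia); ring.
Qed.

Lemma binom_weight_pascal (n : nat) (x : R) (i : nat) :
  binom_weight (S n) x (S i) = x * binom_weight n x i + (1 - x) * binom_weight n x (S i).
Proof.
  unfold binom_weight.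
  destruct (Nat.lt_trichotomy i n) as [Hlt | [-> | Hgt]].
  - replace (S i <=? S n)%nat with true by (symmetry; apply Nat.leb_le; lia).
    replace (i <=? n)%nat with true by (symmetry; apply Nat.leb_le; lia).
    replace (S i <=? n)%nat with true by (symmetry; apply Nat.leb_le; lia).
    rewrite <- pascal by lia.
    replace (S n - S i)%nat with (S (n - S i)) by lia.
    replace (n - i)%nat with (S (n - S i)) by lia. simpl; ring.
  - replace (S n <=? S n)%nat with true by (symmetry; apply Nat.leb_le; lia).
    replace (n <=? n)%nat with true by (symmetry; apply Nat.leb_le; lia).
    replace (S n <=? n)%nat with false by (symmetry; apply Nat.leb_gt; lia).
    rewrite !C_n_n, !Nat.sub_diag; simpl; ring.
  - replace (S i <=? S n)%nat with false by (symmetry; apply Nat.leb_gt; lia).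
    replace (i <=? n)%nat with false by (symmetry; apply Nat.leb_gt; lia).
    replace (S i <=? n)%nat with false by (symmetry; apply Nat.leb_gt; lia).
    ring.
Qed.

Lemma Ebin_S (n : nat) (x : R) (phi : nat -> R) :
  Ebin (S n) x phi = (1 - x) * Ebin n x phi + x * Ebin n x (fun k => phi (S k)).
Proof.
  rewrite (Ebin_binom_weight (S n) x phi (S n)), decomp_sum by lia; simpl pred.
  rewrite (sum_eq _ (fun i => binom_weight n x i * phi (S i) * x
                              + binom_weight n x (S i) * phi (S i) * (1 - x)))
    by (intros i _; rewrite binom_weight_pascal; ring).
  rewrite sum_plus, <- !scal_sum.
  rewrite (Ebin_binom_weight n x phi (S n)), (decomp_sum _ (S n)) by lia; simpl pred.
  rewrite <- (Ebin_binom_weight n x (fun k => phi (S k)) n) by lia.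
  unfold binom_weight; simpl; rewrite !C_n_0, Nat.sub_0_r; ring.
Qed.

Lemma Ebin_O (x : R) (phi : nat -> R) : Ebin 0 x phi = phi 0%nat.
Proof. unfold Ebin; simpl; rewrite C_n_0; ring. Qed.

Definition raw_moment (n : nat) (x : R) (j : nat) : R := Ebin n x (fun k => INR k ^ j).

Lemma Ebin_quartic (n : nat) (x a0 a1 a2 a3 a4 : R) :
  Ebin n x (fun k => a0 + a1 * INR k + a2 * INR k ^ 2 + a3 * INR k ^ 3 + a4 * INR k ^ 4)
  = a0 * raw_moment n x 0 + a1 * raw_moment n x 1 + a2 * raw_moment n x 2
    + a3 * raw_moment n x 3 + a4 * raw_moment n x 4.
Proof.
  unfold raw_moment; rewrite !Ebin_plus, <- !Ebin_scal.
  do 4 f_equal; apply Ebin_ext; intros; ring.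
Qed.

Lemma raw_moments_le4 (n : nat) (x : R) :
  let N := INR n in
  raw_moment n x 0 = 1 /\
  raw_moment n x 1 = N * x /\
  raw_moment n x 2 = N * x + N * (N - 1) * x ^ 2 /\
  raw_moment n x 3 = N * x + 3 * N * (N - 1) * x ^ 2 + N * (N - 1) * (N - 2) * x ^ 3 /\
  raw_moment n x 4 = N * x + 7 * N * (N - 1) * x ^ 2 + 6 * N * (N - 1) * (N - 2) * x ^ 3
                     + N * (N - 1) * (N - 2) * (N - 3) * x ^ 4.
Proof.
  induction n as [|n IH]; intros N; unfold N in *.
  - unfold raw_moment; rewrite !Ebin_O; simpl; repeat split; ring.
  - destruct IH as (H0 & H1 & H2 & H3 & H4).
    assert (Hrec : forall j a0 a1 a2 a3 a4,
      (forall u, (u + 1) ^ j = a0 + a1 * u + a2 * u ^ 2 + a3 * u ^ 3 + a4 * u ^ 4) ->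
      raw_moment (S n) x j = (1 - x) * raw_moment n x j
        + x * (a0 * raw_moment n x 0 + a1 * raw_moment n x 1 + a2 * raw_moment n x 2
               + a3 * raw_moment n x 3 + a4 * raw_moment n x 4)).
    { intros j a0 a1 a2 a3 a4 Hj; unfold raw_moment at 1 2; rewrite Ebin_S, <- Ebin_quartic.
      do 2 f_equal; apply Ebin_ext; intros k _; rewrite S_INR; apply Hj. }
    rewrite (Hrec 0%nat 1 0 0 0 0), (Hrec 1%nat 1 1 0 0 0), (Hrec 2%nat 1 2 1 0 0),
      (Hrec 3%nat 1 3 3 1 0), (Hrec 4%nat 1 4 6 4 1) by (intros; ring).
    rewrite H0, H1, H2, H3, H4, S_INR; repeat split; ring.
Qed.

Lemma Ebin_const1 (n : nat) (x : R) : Ebin n x (fun _ => 1) = 1.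
Proof. exact (proj1 (raw_moments_le4 n x)). Qed.

Lemma variance_bernoulli_le (x : R) : 0 <= x <= 1 -> 0 <= x * (1 - x) <= 1/4.
Proof. intros Hx; pose proof (pow2_ge_0 (x - 1/2)); split; nra. Qed.

Lemma pow3_le_amgm (u s : R) : 0 < s -> u ^ 3 <= (u ^ 2 / s + s * u ^ 4) / 2.
Proof.
  intros Hs.
  assert (0 <= u ^ 2 * (1 - s * u) ^ 2 / s)
    by (apply Rdiv_le_0_compat; [apply Rmult_le_pos; apply pow2_ge_0 | exact Hs]).
  assert (u ^ 2 * (1 - s * u) ^ 2 / s = u ^ 2 / s + s * u ^ 4 - 2 * u ^ 3) by (field; lra).
  lra.
Qed.

Section CenteredMoments.
Variables (n : nat) (x : R).
Hypothesis Hn : (1 <= n)%nat.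

Lemma INR_pos_of_ge1 : 0 < INR n.
Proof. apply lt_0_INR; lia. Qed.

Lemma node_in_01 (k : nat) : (k <= n)%nat -> 0 <= INR k / INR n <= 1.
Proof.
  intros Hk; pose proof INR_pos_of_ge1; pose proof (le_INR k n Hk); pose proof (pos_INR k).
  split; [apply Rdiv_le_0_compat; lra|].
  apply Rmult_le_reg_r with (INR n); [lra|]; unfold Rdiv; rewrite Rmult_assoc, Rinv_l; lra.
Qed.

Lemma Ebin_dev : Ebin n x (fun k => INR k / INR n - x) = 0.
Proof.
  pose proof INR_pos_of_ge1.
  destruct (raw_moments_le4 n x) as (H0 & H1 & _).
  rewrite (Ebin_ext n x _ (fun k => - x + (1 / INR n) * INR k + 0 * INR k ^ 2 + 0 * INR k ^ 3
                                     + 0 * INR k ^ 4)) by (intros; field; lra).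
  rewrite Ebin_quartic, H0, H1; field; lra.
Qed.

Lemma Ebin_dev2 : Ebin n x (fun k => (INR k / INR n - x) ^ 2) = x * (1 - x) / INR n.
Proof.
  pose proof INR_pos_of_ge1.
  destruct (raw_moments_le4 n x) as (H0 & H1 & H2 & _).
  rewrite (Ebin_ext n x _ (fun k => x ^ 2 + (-2 * x / INR n) * INR k + (1 / INR n ^ 2) * INR k ^ 2
                                     + 0 * INR k ^ 3 + 0 * INR k ^ 4)) by (intros; field; lra).
  rewrite Ebin_quartic, H0, H1, H2; field; lra.
Qed.

Lemma Ebin_dev4 : Ebin n x (fun k => (INR k / INR n - x) ^ 4)
  = x * (1 - x) * (1 + 3 * (INR n - 2) * x * (1 - x)) / INR n ^ 3.
Proof.
  pose proof INR_pos_of_ge1.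
  destruct (raw_moments_le4 n x) as (H0 & H1 & H2 & H3 & H4).
  rewrite (Ebin_ext n x _ (fun k => x ^ 4 + (-4 * x ^ 3 / INR n) * INR k
             + (6 * x ^ 2 / INR n ^ 2) * INR k ^ 2 + (-4 * x / INR n ^ 3) * INR k ^ 3
             + (1 / INR n ^ 4) * INR k ^ 4)) by (intros; field; lra).
  rewrite Ebin_quartic, H0, H1, H2, H3, H4; field; lra.
Qed.

Lemma Ebin_dev4_le : 0 <= x <= 1 ->
  Ebin n x (fun k => (INR k / INR n - x) ^ 4) <= 2 * (x * (1 - x)) / INR n ^ 2.
Proof.
  intros Hx; rewrite Ebin_dev4.
  assert (HN1 : 1 <= INR n) by (apply (le_INR 1); lia).
  pose proof (variance_bernoulli_le x Hx) as HP.
  assert (Hfac : 1 + 3 * (INR n - 2) * x * (1 - x) <= 2 * INR n).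
  { assert (INR n * (x * (1 - x)) <= INR n * (1/4)) by (apply Rmult_le_compat_l; lra).
    nra. }
  replace (2 * (x * (1 - x)) / INR n ^ 2) with (x * (1 - x) * (2 * INR n) / INR n ^ 3)
    by (field; pose proof INR_pos_of_ge1; lra).
  apply Rmult_le_compat_r; [apply Rlt_le, Rinv_0_lt_compat, pow_lt; lra|].
  apply Rmult_le_compat_l; lra.
Qed.

Lemma Ebin_abs_dev3_le : 0 <= x <= 1 ->
  INR n * Ebin n x (fun k => Rabs (INR k / INR n - x) ^ 3)
  <= 3 / 2 * (x * (1 - x)) * (1 / sqrt (INR n)).
Proof.
  intros Hx.
  pose proof INR_pos_of_ge1 as HN.
  set (s := sqrt (INR n)).
  assert (Hs : 0 < s) by (apply sqrt_lt_R0; exact HN).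
  assert (Hss : s * s = INR n) by (apply sqrt_sqrt; lra).
  apply Rle_trans with (INR n * Ebin n x (fun k => / (2 * s) * (INR k / INR n - x) ^ 2
                                                  + s / 2 * (INR k / INR n - x) ^ 4)).
  { apply Rmult_le_compat_l; [lra|]; apply Ebin_le; [exact Hx|]; intros k _.
    set (y := INR k / INR n - x).
    replace (/ (2 * s) * y ^ 2 + s / 2 * y ^ 4) with ((Rabs y ^ 2 / s + s * (Rabs y ^ 2) ^ 2) / 2)
      by (rewrite pow2_abs; field; lra).
    replace ((Rabs y ^ 2) ^ 2) with (Rabs y ^ 4) by ring.
    apply pow3_le_amgm, Hs. }
  rewrite Ebin_plus, !Ebin_scal, Ebin_dev2.
  pose proof (Ebin_dev4_le Hx).
  pose proof (variance_bernoulli_le x Hx) as HP.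
  apply Rle_trans with
    (INR n * (/ (2 * s) * (x * (1 - x) / INR n) + s / 2 * (2 * (x * (1 - x)) / INR n ^ 2))).
  { apply Rmult_le_compat_l, Rplus_le_compat_l, Rmult_le_compat_l; lra. }
  right; rewrite <- Hss; field; lra.
Qed.

Lemma Ebin_dev4_add_sqr_dev2_le : 0 <= x <= 1 ->
  INR n * (Ebin n x (fun k => (INR k / INR n - x) ^ 4)
           + Ebin n x (fun k => (INR k / INR n - x) ^ 2) ^ 2)
  <= 9 / 4 * (x * (1 - x)) * (1 / sqrt (INR n)).
Proof.
  intros Hx.
  assert (HN1 : 1 <= INR n) by (apply (le_INR 1); exact Hn).
  assert (Hs : 0 < sqrt (INR n) <= INR n).
  { split; [apply sqrt_lt_R0; lra|].
    rewrite <- (sqrt_sqrt (INR n)) at 2 by lra.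
    rewrite <- (Rmult_1_l (sqrt (INR n))) at 1; apply Rmult_le_compat_r; [apply sqrt_pos|].
    rewrite <- sqrt_1; apply sqrt_le_1_alt, HN1. }
  pose proof (variance_bernoulli_le x Hx) as HP.
  pose proof (Ebin_dev4_le Hx); rewrite Ebin_dev2.
  apply Rle_trans with (9 / 4 * (x * (1 - x)) / INR n).
  - apply Rle_trans with (INR n * (2 * (x * (1 - x)) / INR n ^ 2 + (x * (1 - x) / INR n) ^ 2));
      [apply Rmult_le_compat_l; lra|].
    replace (INR n * (2 * (x * (1 - x)) / INR n ^ 2 + (x * (1 - x) / INR n) ^ 2))
      with ((2 + x * (1 - x)) * (x * (1 - x)) / INR n) by (field; lra).
    apply Rmult_le_compat_r; [apply Rlt_le, Rinv_0_lt_compat; lra | nra].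
  - unfold Rdiv; rewrite Rmult_1_l; apply Rmult_le_compat_l; [lra|].
    apply Rinv_le_contravar; lra.
Qed.

End CenteredMoments.

Lemma Ebin_cov_expand (n : nat) (x : R) (F G Y Rf Rg : nat -> R) (c d a b : R) :
  (forall k, F k = c + a * Y k + Rf k) -> (forall k, G k = d + b * Y k + Rg k) ->
  Ebin n x Y = 0 ->
  Ebin n x (fun k => F k * G k) - Ebin n x F * Ebin n x G
  = a * b * Ebin n x (fun k => Y k ^ 2) + a * Ebin n x (fun k => Y k * Rg k)
    + b * Ebin n x (fun k => Y k * Rf k) + Ebin n x (fun k => Rf k * Rg k)
    - Ebin n x Rf * Ebin n x Rg.
Proof.
  intros HF HG HY.
  rewrite (Ebin_ext n x (fun k => F k * G k)
             (fun k => (c * d) * 1 + (c * b + d * a) * Y k + c * Rg k + d * Rf k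
                       + (a * b) * Y k ^ 2 + a * (Y k * Rg k) + b * (Y k * Rf k)
                       + 1 * (Rf k * Rg k))) by (intros; rewrite HF, HG; ring).
  rewrite (Ebin_ext n x F (fun k => c * 1 + a * Y k + 1 * Rf k)) by (intros; rewrite HF; ring).
  rewrite (Ebin_ext n x G (fun k => d * 1 + b * Y k + 1 * Rg k)) by (intros; rewrite HG; ring).
  rewrite !Ebin_plus, !Ebin_scal, Ebin_const1, HY; ring.
Qed.

Lemma Ebin_cov_remainder_le (n : nat) (x : R) (Y Rf Rg : nat -> R) (a b Kf Kg : R) :
  0 <= x <= 1 -> 0 <= Kf -> 0 <= Kg ->
  (forall k, (k <= n)%nat -> Rabs (Rf k) <= Kf * Y k ^ 2) ->
  (forall k, (k <= n)%nat -> Rabs (Rg k) <= Kg * Y k ^ 2) ->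
  Rabs (a * Ebin n x (fun k => Y k * Rg k) + b * Ebin n x (fun k => Y k * Rf k)
        + Ebin n x (fun k => Rf k * Rg k) - Ebin n x Rf * Ebin n x Rg)
  <= (Rabs a * Kg + Rabs b * Kf) * Ebin n x (fun k => Rabs (Y k) ^ 3)
     + Kf * Kg * (Ebin n x (fun k => Y k ^ 4) + Ebin n x (fun k => Y k ^ 2) ^ 2).
Proof.
  intros Hx HKf HKg Hf Hg.
  assert (Hcube : forall (K : R) (Rem : nat -> R),
            (forall k, (k <= n)%nat -> Rabs (Rem k) <= K * Y k ^ 2) ->
            Rabs (Ebin n x (fun k => Y k * Rem k)) <= K * Ebin n x (fun k => Rabs (Y k) ^ 3)).
  { intros K Rem HR; rewrite <- Ebin_scal; apply Ebin_abs_le; [exact Hx|]; intros k Hk.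
    rewrite Rabs_mult.
    replace (K * Rabs (Y k) ^ 3) with (Rabs (Y k) * (K * Y k ^ 2)) by (rewrite <- pow2_abs; ring).
    apply Rmult_le_compat_l; [apply Rabs_pos | apply HR, Hk]. }
  assert (Hsq : forall (K : R) (Rem : nat -> R),
            (forall k, (k <= n)%nat -> Rabs (Rem k) <= K * Y k ^ 2) ->
            Rabs (Ebin n x Rem) <= K * Ebin n x (fun k => Y k ^ 2)).
  { intros K Rem HR; rewrite <- Ebin_scal; apply Ebin_abs_le; assumption. }
  assert (Hprod : Rabs (Ebin n x (fun k => Rf k * Rg k)) <= Kf * Kg * Ebin n x (fun k => Y k ^ 4)).
  { rewrite <- Ebin_scal; apply Ebin_abs_le; [exact Hx|]; intros k Hk; rewrite Rabs_mult.
    replace (Kf * Kg * Y k ^ 4) with (Kf * Y k ^ 2 * (Kg * Y k ^ 2)) by ring.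
    apply Rmult_le_compat; auto; apply Rabs_pos. }
  pose proof (Hcube Kg Rg Hg) as Hyg; pose proof (Hcube Kf Rf Hf) as Hyf.
  pose proof (Hsq Kf Rf Hf) as Hf2; pose proof (Hsq Kg Rg Hg) as Hg2.
  assert (HRR : Rabs (Ebin n x Rf) * Rabs (Ebin n x Rg)
                <= Kf * Kg * Ebin n x (fun k => Y k ^ 2) ^ 2).
  { replace (Kf * Kg * Ebin n x (fun k => Y k ^ 2) ^ 2)
      with (Kf * Ebin n x (fun k => Y k ^ 2) * (Kg * Ebin n x (fun k => Y k ^ 2))) by ring.
    apply Rmult_le_compat; auto; apply Rabs_pos. }
  unfold Rminus; eapply Rle_trans; [apply Rabs_triang|]; rewrite Rabs_Ropp.
  eapply Rle_trans; [apply Rplus_le_compat_r, Rabs_triang|].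
  eapply Rle_trans; [apply Rplus_le_compat_r, Rplus_le_compat_r, Rabs_triang|].
  rewrite !Rabs_mult.
  pose proof (Rabs_pos a); pose proof (Rabs_pos b).
  assert (Rabs a * Rabs (Ebin n x (fun k => Y k * Rg k))
          <= Rabs a * (Kg * Ebin n x (fun k => Rabs (Y k) ^ 3))) by (apply Rmult_le_compat_l; auto).
  assert (Rabs b * Rabs (Ebin n x (fun k => Y k * Rf k))
          <= Rabs b * (Kf * Ebin n x (fun k => Rabs (Y k) ^ 3))) by (apply Rmult_le_compat_l; auto).
  lra.
Qed.

Lemma Ebin_cov_estimate (n : nat) (x : R) (F G : nat -> R) (c d a b Af Ag Kf Kg : R) :
  (1 <= n)%nat -> 0 <= x <= 1 -> 0 <= Kf -> 0 <= Kg -> Rabs a <= Af -> Rabs b <= Ag ->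
  (forall k, (k <= n)%nat ->
     Rabs (F k - (c + a * (INR k / INR n - x))) <= Kf * (INR k / INR n - x) ^ 2) ->
  (forall k, (k <= n)%nat ->
     Rabs (G k - (d + b * (INR k / INR n - x))) <= Kg * (INR k / INR n - x) ^ 2) ->
  INR n * Rabs (Ebin n x (fun k => F k * G k) - Ebin n x F * Ebin n x G
                - x * (1 - x) / INR n * a * b)
  <= (3 / 2 * (Af * Kg + Ag * Kf) + 9 / 4 * Kf * Kg) * (x * (1 - x)) * (1 / sqrt (INR n)).
Proof.
  intros Hn Hx HKf HKg Ha Hb HF HG.
  set (Y := fun k => INR k / INR n - x).
  set (P := x * (1 - x)); set (w := 1 / sqrt (INR n)).
  assert (HY1 : Ebin n x Y = 0) by exact (Ebin_dev n x Hn).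
  assert (HY2 : Ebin n x (fun k => Y k ^ 2) = P / INR n) by exact (Ebin_dev2 n x Hn).
  assert (HY3 : INR n * Ebin n x (fun k => Rabs (Y k) ^ 3) <= 3 / 2 * P * w)
    by exact (Ebin_abs_dev3_le n x Hn Hx).
  assert (HY4 : INR n * (Ebin n x (fun k => Y k ^ 4) + Ebin n x (fun k => Y k ^ 2) ^ 2)
                <= 9 / 4 * P * w) by exact (Ebin_dev4_add_sqr_dev2_le n x Hn Hx).
  rewrite (Ebin_cov_expand n x F G Y (fun k => F k - (c + a * Y k)) (fun k => G k - (d + b * Y k))
             c d a b), HY2 by (intros; ring || exact HY1).
  match goal with |- context [Rabs ?e] =>
    replace e with (a * Ebin n x (fun k => Y k * (G k - (d + b * Y k)))
                    + b * Ebin n x (fun k => Y k * (F k - (c + a * Y k)))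
                    + Ebin n x (fun k => (F k - (c + a * Y k)) * (G k - (d + b * Y k)))
                    - Ebin n x (fun k => F k - (c + a * Y k))
                      * Ebin n x (fun k => G k - (d + b * Y k))) by (unfold Rdiv; ring) end.
  eapply Rle_trans.
  { apply Rmult_le_compat_l; [apply pos_INR|].
    apply (Ebin_cov_remainder_le n x Y _ _ a b Kf Kg); assumption. }
  assert (HE3 : 0 <= INR n * Ebin n x (fun k => Rabs (Y k) ^ 3)).
  { apply Rmult_le_pos; [apply pos_INR|].
    apply Ebin_nonneg; [exact Hx | intros; apply pow_le, Rabs_pos]. }
  assert (HE4 : 0 <= INR n * (Ebin n x (fun k => Y k ^ 4) + Ebin n x (fun k => Y k ^ 2) ^ 2)).
  { apply Rmult_le_pos; [apply pos_INR|]; apply Rplus_le_le_0_compat; [|apply pow2_ge_0].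
    apply Ebin_nonneg; [exact Hx | intros k _].
    replace (Y k ^ 4) with ((Y k ^ 2) ^ 2) by ring; apply pow2_ge_0. }
  assert (Hcoef : Rabs a * Kg + Rabs b * Kf <= Af * Kg + Ag * Kf)
    by (apply Rplus_le_compat; apply Rmult_le_compat_r; assumption).
  pose proof (Rabs_pos a); pose proof (Rabs_pos b).
  match goal with |- _ <= ?rhs =>
    replace rhs with ((Af * Kg + Ag * Kf) * (3 / 2 * P * w) + Kf * Kg * (9 / 4 * P * w))
      by ring end.
  rewrite Rmult_plus_distr_l, <- !Rmult_assoc, !(Rmult_comm (INR n)), !Rmult_assoc.
  apply Rplus_le_compat; apply Rmult_le_compat; nra.
Qed.

Theorem corollary2p3 :
  exists C : R, 0 < C /\
    forall (f f1 f2 f3 g g1 g2 g3 : R -> R) (x : R) (n : nat),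
      C3_01 f f1 f2 f3 -> C3_01 g g1 g2 g3 ->
      0 <= x <= 1 -> (1 <= n)%nat ->
      INR n * Rabs (bernstein n (fun t => f t * g t) x
                    - bernstein n f x * bernstein n g x
                    - x * (1 - x) / INR n * f1 x * g1 x)
      <= C * (x * (1 - x)) * (1 / sqrt (INR n))
           * Rmax (supnorm f) (supnorm f3) * Rmax (supnorm g) (supnorm g3).
Proof.
  exists 20000; split; [lra|].
  intros f f1 f2 f3 g g1 g2 g3 x n Hf Hg Hx Hn.
  pose proof (Rmax_supnorm_ge0 f f1 f2 f3 Hf) as HMf.
  pose proof (Rmax_supnorm_ge0 g g1 g2 g3 Hg) as HMg.
  pose proof (proj2 (abs_derivs_le f f1 f2 f3 Hf x Hx)) as Hf1.
  pose proof (proj2 (abs_derivs_le g g1 g2 g3 Hg x Hx)) as Hg1.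
  set (Mf := Rmax (supnorm f) (supnorm f3)) in *; set (Mg := Rmax (supnorm g) (supnorm g3)) in *.
  rewrite !bernstein_Ebin.
  eapply Rle_trans.
  { apply (Ebin_cov_estimate n x _ _ (f x) (g x) (f1 x) (g1 x) (18 * Mf) (18 * Mg)
             (67 * Mf) (67 * Mg)); try lra; try assumption; intros k Hk;
      [apply (taylor2_01 f f1 f2 f3 Hf) | apply (taylor2_01 g g1 g2 g3 Hg)];
      auto using node_in_01. }
  pose proof (variance_bernoulli_le x Hx).
  assert (0 < 1 / sqrt (INR n))
    by (apply Rdiv_lt_0_compat; [lra | apply sqrt_lt_R0, INR_pos_of_ge1, Hn]).
  replace (3 / 2 * (18 * Mf * (67 * Mg) + 18 * Mg * (67 * Mf)) + 9 / 4 * (67 * Mf) * (67 * Mg))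
    with (54873 / 4 * (Mf * Mg)) by field.
  replace (20000 * (x * (1 - x)) * (1 / sqrt (INR n)) * Mf * Mg)
    with (20000 * (Mf * Mg) * (x * (1 - x)) * (1 / sqrt (INR n))) by ring.
  apply Rmult_le_compat_r; [lra|]; apply Rmult_le_compat_r; [lra|].
  apply Rmult_le_compat_r; [apply Rmult_le_pos|]; lra.
Qed.
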